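(* For distinct $l, l' \in H^*$ and every $n \ge 1$, the degree-$n$ parts of $\Phi_l(R(G/H,1))$ and $\Phi_{l'}(R(G/H,1))$ are orthogonal with respect to $\langle \cdot, \cdot \rangle$; i.e., the sub-bialgebras $\Phi_l(R(G/H,1))$, $l \in H^*$, are pairwise orthogonal in positive degrees.
   Context: Let $G$ be a finite abelian group (written additively) and $H \subseteq G$ a subgroup. For $n \ge 1$, $S_n[G] = S_n \ltimes G^n$ is the group of $n \times n$ monomial matrices whose nonzero entries lie in $G$. Let $s: S_n[G] \to G$ be the homomorphism sending a monomial matrix to the sum of its nonzero entries, and let $G_n(G,H) = \{g \in S_n[G] : s(g) \in H\}$. For $n \ge 1$, $R_n(G,H)$ is the Grothendieck group of finite-dimensional complex representations of $G_n(G,H)$, $R_0(G,H) = \mathbb{Z}$, and $R(G,H) = \bigoplus_{n \ge 0} R_n(G,H)$, with graded bilinear form $\langle \cdot,\cdot\rangle$ for which the irreducible classes (and $1 \in R_0$) form an orthonormal basis; similarly $R(G/H,1)$ is built from the groups $G_n(G/H,1)$ of monomial matrices with entries in $G/H$ summing to $0$. Let $\phi: G_n(G,H) \to G_n(G/H,1)$ be reduction of entries mod $H$ (surjective, kernel the diagonal subgroup $H^n$), and $\phi^*: R(G/H,1) \to R(G,H)$ the graded map induced by pullback. $H^* = \mathrm{Hom}(H, \mathbb{C}^\times)$; for $l \in H^*$, $\tau_l$ is the graded operator on $R(G,H)$ induced by tensoring with the linear character $g \mapsto l(s(g))$ of $G_n(G,H)$, and $\Phi_l = \tau_l \circ \phi^*$.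 *)

From HB Require Import structures.
From mathcomp Require Import all_boot all_order all_algebra all_fingroup all_solvable all_field all_character.
Set Implicit Arguments. Unset Strict Implicit. Unset Printing Implicit Defensive.
Import GRing.Theory Num.Theory.

(* Monomial matrices with entries in a finite abelian group Z (written       *)
(* additively, a finZmodType), realised faithfully as permutations of        *)
(* 'I_n * Z : the monomial matrix with underlying permutation s and nonzero *)
(* entries f acts by  (i, a) |-> (s i, a + f i).                             *)

Section Wreath.
Variables (Z : finZmodType) (n : nat).
Implicit Types (s t : {perm 'I_n}) (f g : 'I_n -> Z).

Definition mono_fun (s : {perm 'I_n}) (f : 'I_n -> Z) (x : 'I_n * Z) : 'I_n * Z :=
  (s x.1, (x.2 + f x.1)%R).

Lemma mono_fun_inj s f : injective (mono_fun s f).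
Proof.
move=> [i a] [j b] [/perm_inj eij]; rewrite /= in eij *; subst j.
by move/addIr => ->.
Qed.

Definition mono s f : {perm 'I_n * Z} := perm (@mono_fun_inj s f).

Lemma monoE s f i a : mono s f (i, a) = (s i, (a + f i)%R).
Proof. by rewrite permE. Qed.

Lemma eq_mono s (s' : {perm 'I_n}) f (f' : 'I_n -> Z) : s =1 s' -> f =1 f' -> mono s f = mono s' f'.
Proof. by move=> es ef; apply/permP => -[i a]; rewrite !monoE es ef. Qed.

Definition sig_raw (p : {perm 'I_n * Z}) (i : 'I_n) : 'I_n := (p (i, 0%R)).1.
Definition ent (p : {perm 'I_n * Z}) (i : 'I_n) : Z := (p (i, 0%R)).2.

Definition mkperm (h0 : 'I_n -> 'I_n) : {perm 'I_n} :=
  match injectiveP h0 with ReflectT h => perm h | ReflectF _ => 1%g end.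

Lemma mkpermE (h0 : 'I_n -> 'I_n) : injective h0 -> mkperm h0 =1 h0.
Proof. by rewrite /mkperm; case: (injectiveP h0) => // h _ i; rewrite permE. Qed.

Definition sig (p : {perm 'I_n * Z}) : {perm 'I_n} := mkperm (sig_raw p).

Definition Sn : {set {perm 'I_n * Z}} := [set p | mono (sig p) (ent p) == p].

Definition ssum (p : {perm 'I_n * Z}) : Z := (\sum_i ent p i)%R.

Lemma sig_mono s f : sig (mono s f) =1 s.
Proof.
move=> i; rewrite /sig mkpermE; first by rewrite /sig_raw monoE.
by move=> j k; rewrite /sig_raw !monoE /=; apply: perm_inj.
Qed.

Lemma ent_mono s f : ent (mono s f) =1 f.
Proof. by move=> i; rewrite /ent monoE /= add0r. Qed.

Lemma mono_Sn s f : mono s f \in Sn.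
Proof. by rewrite inE; apply/eqP/eq_mono; [apply: sig_mono | apply: ent_mono]. Qed.

Lemma SnP p : p \in Sn -> p = mono (sig p) (ent p).
Proof. by rewrite inE => /eqP. Qed.

Lemma ssum_mono s f : ssum (mono s f) = (\sum_i f i)%R.
Proof. by apply: eq_bigr => i _; rewrite ent_mono. Qed.

Lemma monoM s f t g :
  (mono s f * mono t g)%g = mono (s * t)%g (fun i => f i + g (s i))%R.
Proof. by apply/permP => -[i a]; rewrite permM !monoE permM addrA. Qed.

Lemma mono1 : mono 1%g (fun _ => 0%R) = 1%g.
Proof. by apply/permP => -[i a]; rewrite monoE !perm1 addr0. Qed.

Lemma ssumM_mono s f t g :
  ssum (mono s f * mono t g)%g = (ssum (mono s f) + ssum (mono t g))%R.
Proof.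
rewrite monoM !ssum_mono big_split /=; congr (_ + _)%R.
by rewrite [RHS](reindex_inj (@perm_inj _ s)).
Qed.

Variable K : {group Z}.

Definition Gn_set : {set {perm 'I_n * Z}} := [set p in Sn | ssum p \in K].

Lemma Gn_group_set : group_set Gn_set.
Proof.
apply/group_setP; split.
  rewrite inE -mono1 mono_Sn ssum_mono big1 //; exact: (group1 K).
move=> p q /setIdP[Sp Kp] /setIdP[Sq Kq].
apply/setIdP; split; first by rewrite (SnP Sp) (SnP Sq) monoM mono_Sn.
rewrite (SnP Sp) (SnP Sq) ssumM_mono -(SnP Sp) -(SnP Sq).
exact: (groupM Kp Kq).
Qed.

Canonical Gn := Group Gn_group_set.

Lemma ssum_morphM : {in Gn &, {morph ssum : x y / (x * y)%g >-> (x * y)%g}}.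
Proof.
move=> p q /setIdP[Sp _] /setIdP[Sq _].
by rewrite (SnP Sp) (SnP Sq) ssumM_mono.
Qed.

Canonical ssum_morph := Morphism ssum_morphM.

End Wreath.

Arguments Gn : clear implicits.

(* Reduction of entries along an additive map pi : G -> Q (in the theorem,  *)
(* pi is surjective with kernel H, i.e. Q is a model of G/H).                *)

Section Reduction.
Variables (G Q : finZmodType) (pi : {additive G -> Q}) (n : nat) (H : {group G}).

Definition redm (p : {perm 'I_n * G}) : {perm 'I_n * Q} :=
  mono (sig p) (fun i => pi (ent p i)).

Lemma redm_mono s f : redm (mono s f) = mono s (fun i => pi (f i)).
Proof. by apply: eq_mono => i; rewrite ?sig_mono ?ent_mono. Qed.

Lemma redm_morphM : {in Gn G n H &, {morph redm : x y / (x * y)%g}}.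
Proof.
move=> p q /setIdP[Sp _] /setIdP[Sq _].
rewrite (SnP Sp) (SnP Sq) monoM !redm_mono monoM.
by apply: eq_mono => // i; rewrite raddfD.
Qed.

Canonical redm_morph := Morphism redm_morphM.

End Reduction.

(* Phi_l = tau_l o phi^*, on class functions of G_n(G/H,1):
   (Phi_l x)(g) = l(s(g)) * x(phi(g)). *)
Definition Phi (G Q : finZmodType) (pi : {additive G -> Q}) (n : nat)
    (H : {group G}) (l : 'CF(H)) (x : 'CF(Gn Q n 1%G)) : 'CF(Gn G n H) :=
  (cfMorph ('Res[(ssum_morph n H @* Gn G n H)%G] l) *
   cfMorph ('Res[(redm_morph pi n H @* Gn G n H)%G] x))%R.

Lemma ssum_im (G : finZmodType) n (H : {group G}) :
  (ssum_morph n H @* Gn G n H)%g \subset H.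
Proof. by apply/subsetP => _ /morphimP[p _ /setIdP[_ Hp] ->]. Qed.

Lemma redm_im (G Q : finZmodType) (pi : {additive G -> Q}) n (H : {group G}) :
  {in H, forall g, pi g = 0%R} ->
  (redm_morph pi n H @* Gn G n H)%g \subset Gn Q n 1%G.
Proof.
move=> piH; apply/subsetP => _ /morphimP[p _ /setIdP[Sp Hp] ->] /=.
rewrite /redm; apply/setIdP; split; first exact: mono_Sn.
rewrite ssum_mono -raddf_sum piH //; exact: group1.
Qed.

Lemma PhiE (G Q : finZmodType) (pi : {additive G -> Q}) n (H : {group G})
    (l : 'CF(H)) (x : 'CF(Gn Q n 1%G)) g :
  {in H, forall g, pi g = 0%R} -> g \in Gn G n H ->
  Phi pi l x g = (l (ssum g) * x (redm pi g))%R.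
Proof.
move=> piH Gg; rewrite /Phi cfunE !cfMorphE //= ?cfResE ?ssum_im ?redm_im //.
- exact: mem_morphim.
- exact: mem_morphim.
Qed.

From HB Require Import structures.
From mathcomp Require Import all_boot all_order all_algebra all_fingroup all_solvable all_field all_character.
Import GRing.Theory Num.Theory.
From mathcomp Require Import ring.

Set Implicit Arguments.
Unset Strict Implicit.
Unset Printing Implicit Defensive.

Local Open Scope ring_scope.

(* Let h in H separate l and l', and let d in G_n(G, H) be the diagonal matrix
   diag(h, 0, ..., 0), so that phi(d) = 1 and s(d) = h.  Right translation by d
   multiplies Phi_l x by l(h) and Phi_l' y by l'(h), so it multiplies the sum
   defining <Phi_l x, Phi_l' y> by l(h) l'(h)^*, which is not 1: the sum
   vanishes. *)

Lemma cfdot_eq0_translate (gT : finGroupType) (K : {group gT})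
    (f g : 'CF(K)) (d : gT) (a b : algC) :
  d \in K -> {in K, forall x, f (x * d)%g = a * f x} ->
  {in K, forall x, g (x * d)%g = b * g x} -> a * b^* != 1 ->
  '[f, g] = 0.
Proof.
move=> Kd fd gd ab1; rewrite cfdotE.
set S := \sum_(x in K) _.
have S_eq : S = a * b^* * S.
  rewrite {1}/S (reindex_inj (mulIg d)) /=.
  rewrite (eq_bigl (mem K)) => [|x]; last by rewrite groupMr.
  rewrite /S big_distrr; apply: eq_bigr => x Kx.
  by rewrite fd // gd // rmorphM /=; ring.
suff -> : S = 0 by rewrite mulr0.
by apply/eqP; apply: contraNT ab1 => S0; apply/eqP/(mulIf S0); rewrite mul1r -S_eq.
Qed.

Lemma lin_char_mul_conj_eq1 (gT : finGroupType) (K : {group gT})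
    (l l' : 'CF(K)) (h : gT) :
  l' \is a linear_char -> h \in K -> l h * (l' h)^* = 1 -> l h = l' h.
Proof.
move=> Ll' Kh lh1.
have l'h_unit : (l' h)^* * l' h = 1.
  by rewrite mulrC -normCK (normC_lin_char Ll' Kh) expr1n.
by rewrite -[l h]mulr1 -l'h_unit mulrA lh1 mul1r.
Qed.

Lemma cfun_separate (gT : finGroupType) (K : {group gT}) (l l' : 'CF(K)) :
  l != l' -> exists2 h, h \in K & l h != l' h.
Proof.
move=> nll'; apply/exists_inP; apply: contraR nll' => /exists_inPn eq_ll'.
by apply/eqP/cfun_inP => h Kh; apply/eqP; rewrite -[_ == _]negbK eq_ll'.
Qed.

Section KernelLift.
Variables (G Q : finZmodType) (pi : {additive G -> Q}) (H : {group G}).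
Hypothesis piH : {in H, forall g, pi g = 0}.

Lemma kernel_lift n h : (0 < n)%N -> h \in H ->
  exists2 d, d \in Gn G n H & ssum d = h /\ redm pi d = 1%g.
Proof.
move=> n_gt0 Hh; pose i0 : 'I_n := Ordinal n_gt0.
pose d := mono 1%g (fun i : 'I_n => if i == i0 then h else 0).
have sd : ssum d = h.
  rewrite ssum_mono (bigD1 i0) // eqxx big1 => [|i /negbTE-> //].
  exact: addr0.
exists d; first by rewrite inE mono_Sn sd.
split=> //; rewrite redm_mono -mono1; apply: eq_mono => // i.
by case: ifP => _; [exact: piH | exact: raddf0].
Qed.

Lemma Phi_translate n (l : 'CF(H)) (x : 'CF(Gn Q n 1%G)) d g :
  l \is a linear_char -> d \in Gn G n H -> redm pi d = 1%g -> g \in Gn G n H ->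
  Phi pi l x (g * d)%g = l (ssum d) * Phi pi l x g.
Proof.
move=> Ll Gd rd Gg; have Gn_Hs p : p \in Gn G n H -> ssum p \in H.
  by case/setIdP.
rewrite !PhiE ?groupM // (ssum_morphM Gg Gd) (redm_morphM pi Gg Gd) rd mulg1.
by rewrite lin_charM ?Gn_Hs // mulrCA mulrA.
Qed.

End KernelLift.

Theorem proposition3
    (G Q : finZmodType) (H : {group G}) (pi : {additive G -> Q})
    (pi_surj : forall q : Q, exists g : G, pi g = q)
    (pi_ker : forall g : G, (pi g == 0%R) = (g \in H))
    (l l' : 'CF(H)) :
  l \is a linear_char -> l' \is a linear_char -> l != l' ->
  forall n : nat, (0 < n)%N ->
  forall x y : 'CF(Gn Q n 1%G),
    x \in 'Z[irr (Gn Q n 1%G)]%g -> y \in 'Z[irr (Gn Q n 1%G)]%g ->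
    ('[Phi pi l x, Phi pi l' y] = 0)%R.
Proof.
move=> Ll Ll' nll' n n_gt0 x y _ _.
have piH : {in H, forall g, pi g = 0} by move=> g Hg; apply/eqP; rewrite pi_ker.
have [h Hh lh] := cfun_separate nll'.
have [d Gd [sd rd]] := kernel_lift piH n_gt0 Hh.
apply: (cfdot_eq0_translate (a := l h) (b := l' h) Gd) => [g Gg|g Gg|].
- by rewrite (Phi_translate piH) ?sd.
- by rewrite (Phi_translate piH) ?sd.
by apply: contra lh => /eqP/(lin_char_mul_conj_eq1 Ll' Hh)->.
Qed.
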